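(* Let $M$ be an $m\times n$ ACI-matrix over a field $\mathbb{F}$, let $F\subseteq\{1,\dots,n\}$ be a factor set (resp. semifactor set) of $M$, and let $P$ be a permutation matrix of order $m$ such that $$PMQ_F=\begin{bmatrix} A & B\\ 0 & C\end{bmatrix},$$ where $A$ has $\#F$ columns and $A$ has linearly independent rows. Then this block decomposition is an $F$-decomposition (resp. $F$-semidecomposition); that is, the zero block is Big (resp. Medium), $A$ is FRmR and $C$ is FCmR.
   Context: Let $\mathbb{F}$ be a field. An ACI-matrix is a matrix with entries in $\mathbb{F}[x_1,\dots,x_k]$ whose entries are polynomials of degree at most one and such that no indeterminate appears in two different columns. A completion is an assignment of values in $\mathbb{F}$ to all indeterminates; $\mathrm{maxRank}(N)$ is the maximum rank of a completion. ACI-matrices (and blocks) of size $0\times q$ ($q>0$, wide degenerate), $p\times 0$ ($p>0$, tall degenerate) and $0\times0$ (void) are allowed. $N$ is FRmR if $\mathrm{maxRank}(N)=\mathrm{rows}(N)$, FCmR if $\mathrm{maxRank}(N)=\mathrm{cols}(N)$; by convention tall degenerate is FRmR, wide degenerate is FCmR, void is both. For an $m\times n$ block matrix $\begin{bmatrix} A & B\\ 0 & C\end{bmatrix}$ with lower-left $r\times s$ zero block, the zero block is Big if $r+s>\max\{m,n\}$, Medium if $r+s=\max\{m,n\}$. For $F=\{f_1<\dots<f_s\}\subseteq\{1,\dots,n\}$ with complement $\{g_1<\dots<g_{n-s}\}$, $Q_F$ is the $n\times n$ permutation matrix such that $MQ_F$ has as columns $f_1,\dots,f_s,g_1,\dots,g_{n-s}$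 of $M$ in that order. $F$ is a factor set of $M$ if there is a nonsingular constant $m\times m$ matrix $R$ with $RMQ_F=\begin{bmatrix} A & B\\ 0 & C\end{bmatrix}$, $A$ having $\#F$ columns, the zero block Big, $A$ FRmR and $C$ FCmR; such an $RMQ_F$ is an $F$-decomposition. $F$ is a semifactor set (and $RMQ_F$ an $F$-semidecomposition) if the same holds with the zero block Medium. Linear independence of rows is over $\mathbb{F}$: if a column involves indeterminates $y_1,\dots,y_t$, its entries lie in the $\mathbb{F}$-vector space $\mathbb{F}+\mathbb{F}y_1+\dots+\mathbb{F}y_t$, and rows are vectors in the product of these spaces. *)

From mathcomp Require Import all_boot all_order all_algebra.
Set Implicit Arguments. Unset Strict Implicit. Unset Printing Implicit Defensive.
Import GRing.Theory.
Local Open Scope ring_scope.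

(* An "affine" matrix over F[x_0..x_{k-1}] whose entries have degree <= 1:
   entry (i,j) is  amc i j + \sum_t (amv t) i j * x_t . *)
Record amx (F : fieldType) (k m n : nat) := AMx {
  amc : 'M[F]_(m, n);
  amv : 'I_k -> 'M[F]_(m, n) }.

Section Defs.
Variables (F : fieldType) (k : nat).

Definition is_ACI m n (N : amx F k m n) : Prop :=
  forall (t : 'I_k) (i1 i2 : 'I_m) (j1 j2 : 'I_n),
    amv N t i1 j1 != 0 -> amv N t i2 j2 != 0 -> j1 = j2.

Definition amx_lmul m m' n (R : 'M[F]_(m', m)) (N : amx F k m n) : amx F k m' n :=
  AMx (R *m amc N) (fun t => R *m amv N t).
Definition amx_rmul m n n' (N : amx F k m n) (Q : 'M[F]_(n, n')) : amx F k m n' :=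
  AMx (amc N *m Q) (fun t => amv N t *m Q).

Definition amx_sub m n m' n' (f : 'I_m' -> 'I_m) (g : 'I_n' -> 'I_n)
  (N : amx F k m n) : amx F k m' n' :=
  AMx (mxsub f g (amc N)) (fun t => mxsub f g (amv N t)).

Definition completion m n (N : amx F k m n) (v : 'I_k -> F) : 'M[F]_(m, n) :=
  amc N + \sum_(t < k) v t *: amv N t.

Definition maxRank_is m n (N : amx F k m n) (r : nat) : Prop :=
  (exists v, \rank (completion N v) = r) /\ (forall v, (\rank (completion N v) <= r)%N).

(* FRmR / FCmR, with the conventions for degenerate (and void) matrices *)
Definition FRmR m n (N : amx F k m n) : Prop := n = 0%N \/ maxRank_is N m.
Definition FCmR m n (N : amx F k m n) : Prop := m = 0%N \/ maxRank_is N n.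

Definition amx_zero m n (N : amx F k m n) : Prop :=
  amc N = 0 /\ forall t, amv N t = 0.

(* rows linearly independent over F (rows viewed as vectors of constant
   terms and coefficients of the indeterminates) *)
Definition rows_indep m n (N : amx F k m n) : Prop :=
  forall l : 'I_m -> F,
    (forall j, \sum_(i < m) l i * amc N i j = 0) ->
    (forall t j, \sum_(i < m) l i * amv N t i j = 0) ->
    forall i, l i = 0.
End Defs.

(* Q_F : MQ_F has columns f_1 < ... < f_s, g_1 < ... < g_{n-s} of M *)
Definition qF_idx n (S : {set 'I_n}) (j : 'I_n) : 'I_n :=
  nth j (enum S ++ enum (~: S)) j.
Definition Q_F (F : fieldType) n (S : {set 'I_n}) : 'M[F]_n :=
  \matrix_(i, j) (qF_idx S j == i)%:R.

Lemma bot_idx_proof m r (hr : (r <= m)%N) (i : 'I_r) : (m - r + i < m)%N.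
Proof.
have := ltn_ord i; rewrite -(ltn_add2l (m - r)) subnK //.
Qed.
Definition top_idx m r (i : 'I_(m - r)) : 'I_m := widen_ord (leq_subr r m) i.
Definition bot_idx m r (hr : (r <= m)%N) (i : 'I_r) : 'I_m :=
  Ordinal (bot_idx_proof hr i).
Lemma card_set_le n (S : {set 'I_n}) : (#|S| <= n)%N.
Proof. by apply: leq_trans (max_card _) _; rewrite card_ord. Qed.
Definition left_idx n (S : {set 'I_n}) (j : 'I_#|S|) : 'I_n :=
  widen_ord (card_set_le S) j.
Definition right_idx n (S : {set 'I_n}) (j : 'I_(n - #|S|)) : 'I_n :=
  bot_idx (leq_subr #|S| n) j.

(* For N = [A B; 0 C] (m x n) with lower-left zero block of size r x #|S|: *)
Section Blocks.
Variables (F : fieldType) (k m n : nat) (S : {set 'I_n}) (r : nat) (hr : (r <= m)%N).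
Definition blkA (N : amx F k m n) : amx F k (m - r) #|S| :=
  amx_sub (@top_idx m r) (@left_idx n S) N.
Definition blk0 (N : amx F k m n) : amx F k r #|S| :=
  amx_sub (bot_idx hr) (@left_idx n S) N.
Definition blkC (N : amx F k m n) : amx F k r (n - #|S|) :=
  amx_sub (bot_idx hr) (@right_idx n S) N.
End Blocks.

Inductive zkind := Big | Medium.
Definition zsize_ok (z : zkind) (r s m n : nat) : bool :=
  match z with
  | Big => (maxn m n < r + s)%N
  | Medium => (r + s == maxn m n)%N
  end.

(* N (already of the form R M Q_F) is an F-decomposition (z = Big) or an
   F-semidecomposition (z = Medium) with lower-left zero block of r rows *)
Definition is_Fdecomp (F : fieldType) k m n (z : zkind) (S : {set 'I_n})
  (r : nat) (hr : (r <= m)%N) (N : amx F k m n) : Prop :=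
  [/\ amx_zero (blk0 S hr N), zsize_ok z r #|S| m n,
      FRmR (blkA S r N) & FCmR (blkC S hr N)].

Definition is_factor_set (F : fieldType) k m n (z : zkind) (M : amx F k m n)
  (S : {set 'I_n}) : Prop :=
  exists R : 'M[F]_m, R \in unitmx /\
    exists r (hr : (r <= m)%N),
      is_Fdecomp z S hr (amx_lmul R (amx_rmul M (Q_F F S))).

(* Both R M Q_F (the given decomposition, with r' zero rows) and P M Q_F are
   row-equivalent: R M Q_F = G (P M Q_F) with G = R P^-1 invertible.  In the
   first #F columns P M Q_F vanishes below A, so the zero block of R M Q_F says
   that the last r' rows of G, restricted to the first m - r columns, kill A;
   since A has independent rows, that r' x (m - r) block of G is zero.  Then these
   r' independent rows of G live in r columns, so r' <= r, while the A-block of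
   R M Q_F is a left multiple of A, so its full row rank m - r' is at most
   m - r (when F is empty, Big is impossible and Medium forces r' = m).  With
   r = r', G is block upper triangular and the completions of both the A- and
   C-blocks of R M Q_F are left multiples of those of P M Q_F, so maximal ranks
   transfer.  Neither the ACI condition nor the fact that P is a permutation
   (beyond its invertibility) plays any role. *)

From mathcomp Require Import all_boot all_order all_algebra zify.
Set Implicit Arguments. Unset Strict Implicit. Unset Printing Implicit Defensive.
Import GRing.Theory.
Local Open Scope ring_scope.

Section TopBottomSplit.
Variables (m r : nat) (hr : (r <= m)%N).
Local Notation top := (@top_idx m r).
Local Notation bot := (bot_idx hr).

Lemma bot_idx_inj : injective bot.
Proof. by move=> a b /(congr1 val) /addnI /val_inj. Qed.

Lemma big_top_bot (V : nmodType) (u : 'I_m -> V) :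
  \sum_j u j = \sum_a u (top a) + \sum_b u (bot b).
Proof.
have e : (m - r + r = m)%N by rewrite subnK.
rewrite (reindex (cast_ord e)) /=; last first.
  by apply: onW_bij; exists (cast_ord (esym e)); [apply: cast_ordK | apply: cast_ordKV].
by rewrite big_split_ord; congr (_ + _); apply: eq_bigr => i _; congr u; apply: val_inj.
Qed.

Lemma mxsub_mul_top_bot (R : pzSemiRingType) p q p' q' (f : 'I_p' -> 'I_p)
    (g : 'I_q' -> 'I_q) (L : 'M[R]_(p, m)) (Y : 'M[R]_(m, q)) :
  mxsub f g (L *m Y) = mxsub f top L *m mxsub top g Y + mxsub f bot L *m mxsub bot g Y.
Proof.
apply/matrixP => i j; rewrite !mxE big_top_bot.
by congr (_ + _); apply: eq_bigr => a _; rewrite !mxE.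
Qed.

End TopBottomSplit.

Section SubmatrixRank.
Variable F : fieldType.

Lemma mxrank_colsub m n n' (g : 'I_n' -> 'I_n) (A : 'M[F]_(m, n)) :
  (\rank (colsub g A) <= \rank A)%N.
Proof. by rewrite -[A in colsub _ A]mulmx1 -mulmx_colsub mxrankM_maxl. Qed.

Lemma mxrank_rowsub1 m p (f : 'I_p -> 'I_m) :
  injective f -> \rank (rowsub f (1%:M : 'M[F]_m)) = p.
Proof.
move=> f_inj; apply/eqP; rewrite eqn_leq rank_leq_row /=.
have id_sub : colsub f (rowsub f 1%:M) = 1%:M :> 'M[F]_p.
  by apply/matrixP => i j; rewrite !mxE (inj_eq f_inj).
by rewrite -{1}(mxrank1 F p) -id_sub mxrank_colsub.
Qed.

Lemma mxrank_rowsub_unit m p (f : 'I_p -> 'I_m) (G : 'M[F]_m) :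
  injective f -> G \in unitmx -> \rank (rowsub f G) = p.
Proof.
by move=> f_inj G_unit; rewrite rowsubE mxrankMfree ?row_free_unit // mxrank_rowsub1.
Qed.

End SubmatrixRank.

Section Completions.
Variables (F : fieldType) (k : nat).

Lemma completion_lmul m m' n (L : 'M[F]_(m', m)) (N : amx F k m n) v :
  completion (amx_lmul L N) v = L *m completion N v.
Proof.
rewrite /completion /= mulmxDr mulmx_sumr; congr (_ + _).
by apply: eq_bigr => t _; rewrite scalemxAr.
Qed.

Lemma completion_sub m n m' n' (f : 'I_m' -> 'I_m) (g : 'I_n' -> 'I_n)
    (N : amx F k m n) v :
  completion (amx_sub f g N) v = mxsub f g (completion N v).
Proof.
apply/matrixP => i j; rewrite /completion /= !mxE !summxE.
by congr (_ + _); apply: eq_bigr => t _; rewrite !mxE.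
Qed.

Lemma completion_amx_zero m n (N : amx F k m n) v :
  amx_zero N -> completion N v = 0.
Proof.
by case=> c0 v0; rewrite /completion c0 add0r big1 // => t _; rewrite v0 scaler0.
Qed.

Lemma rows_indep_mulmx0 m n p (A : amx F k m n) (L : 'M[F]_(p, m)) :
  rows_indep A -> L *m amc A = 0 -> (forall t, L *m amv A t = 0) -> L = 0.
Proof.
move=> A_indep Lc Lv; apply/matrixP => i j; rewrite mxE.
apply: (A_indep (fun a => L i a)) => [c | t c].
  by move/matrixP: Lc => /(_ i c); rewrite !mxE.
by move/matrixP: (Lv t) => /(_ i c); rewrite !mxE.
Qed.

Lemma FRmR_rank_le m n (N1 N2 : amx F k m n) :
  (forall v, \rank (completion N2 v) <= \rank (completion N1 v))%N ->
  FRmR N2 -> FRmR N1.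
Proof.
move=> le12 [n0 | [[v hv] _]]; [by left | right; split => [|w]; last exact: rank_leq_row].
by exists v; apply/eqP; rewrite eqn_leq rank_leq_row -{1}hv le12.
Qed.

Lemma FCmR_rank_le m n (N1 N2 : amx F k m n) :
  (forall v, \rank (completion N2 v) <= \rank (completion N1 v))%N ->
  FCmR N2 -> FCmR N1.
Proof.
move=> le12 [m0 | [[v hv] _]]; [by left | right; split => [|w]; last exact: rank_leq_col].
by exists v; apply/eqP; rewrite eqn_leq rank_leq_col -{1}hv le12.
Qed.

End Completions.

Section RowEquivalentDecompositions.
Variables (F : fieldType) (k m n : nat) (M : amx F k m n) (S : {set 'I_n}).
Variables (P R : 'M[F]_m) (r : nat) (hr : (r <= m)%N).
Hypotheses (P_unit : P \in unitmx) (R_unit : R \in unitmx).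
Hypothesis N0 : amx_zero (blk0 S hr (amx_lmul P M)).
Hypothesis A_indep : rows_indep (blkA S r (amx_lmul P M)).

Local Notation top := (@top_idx m r).
Local Notation bot := (bot_idx hr).
Local Notation left := (@left_idx n S).
Local Notation G := (R *m invmx P).

Lemma mulRmxE q (X : 'M[F]_(m, q)) : R *m X = G *m (P *m X).
Proof. by rewrite mulmxA mulmxKV. Qed.

Lemma G_unit : G \in unitmx.
Proof. by rewrite unitmx_mul R_unit unitmx_inv. Qed.

Lemma mxsub_left_mul_G p (f : 'I_p -> 'I_m) (X : 'M[F]_(m, n)) :
  mxsub bot left (P *m X) = 0 ->
  mxsub f left (R *m X) = mxsub f top G *m mxsub top left (P *m X).
Proof. by move=> X0; rewrite mulRmxE (mxsub_mul_top_bot hr) X0 mulmx0 addr0. Qed.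

Lemma completion_lower_left0 v : mxsub bot left (P *m completion M v) = 0.
Proof.
by rewrite -completion_lmul -completion_sub; apply: completion_amx_zero.
Qed.

Lemma G_lower_left0 r' (hr' : (r' <= m)%N) :
  amx_zero (blk0 S hr' (amx_lmul R M)) -> mxsub (bot_idx hr') top G = 0.
Proof.
case=> N'0c N'0v; case: N0 => N0c N0v.
apply: (rows_indep_mulmx0 A_indep) => [|t]; first by rewrite -mxsub_left_mul_G.
by rewrite -mxsub_left_mul_G; [apply: N'0v | apply: N0v].
Qed.

Lemma r'_le_r r' (hr' : (r' <= m)%N) :
  amx_zero (blk0 S hr' (amx_lmul R M)) -> (r' <= r)%N.
Proof.
move=> N'0; rewrite -(mxrank_rowsub_unit (bot_idx_inj (hr := hr')) G_unit).
rewrite -[G in rowsub _ G]mulmx1 (mxsub_mul_top_bot hr) (G_lower_left0 N'0) mul0mx add0r.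
exact: leq_trans (mxrankM_maxl _ _) (rank_leq_col _).
Qed.

Lemma rank_blkA_le r' v :
  (\rank (completion (blkA S r' (amx_lmul R M)) v)
     <= \rank (completion (blkA S r (amx_lmul P M)) v))%N.
Proof.
rewrite !completion_sub !completion_lmul mxsub_left_mul_G ?completion_lower_left0 //.
exact: mxrankM_maxr.
Qed.

Lemma r_le_r' z r' (hr' : (r' <= m)%N) :
  zsize_ok z r' #|S| m n -> FRmR (blkA S r' (amx_lmul R M)) -> (r <= r')%N.
Proof.
move=> zs [S0 | [[v hv] _]].
  by move: zs; rewrite S0; case: z => /=; lia.
have := leq_trans (rank_blkA_le r' v) (rank_leq_row _); rewrite hv; lia.
Qed.

Lemma rank_blkC_le (G0 : mxsub bot top G = 0) v :
  (\rank (completion (blkC S hr (amx_lmul R M)) v)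
     <= \rank (completion (blkC S hr (amx_lmul P M)) v))%N.
Proof.
rewrite !completion_sub !completion_lmul mulRmxE (mxsub_mul_top_bot hr) G0 mul0mx add0r.
exact: mxrankM_maxr.
Qed.

Theorem is_Fdecomp_row_equiv z r' (hr' : (r' <= m)%N) :
  is_Fdecomp z S hr' (amx_lmul R M) -> is_Fdecomp z S hr (amx_lmul P M).
Proof.
case=> N'0 zs FA' FC'.
have r'r : r' = r by apply/eqP; rewrite eqn_leq r'_le_r // (r_le_r' hr' zs FA').
subst r'; rewrite (bool_irrelevance hr' hr) in N'0 FC'.
split => //; first exact: FRmR_rank_le (rank_blkA_le r) FA'.
exact: FCmR_rank_le (rank_blkC_le (G_lower_left0 N'0)) FC'.
Qed.

End RowEquivalentDecompositions.

Theorem lemma4p6 (F : fieldType) (k m n : nat) (M : amx F k m n)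
  (z : zkind) (S : {set 'I_n}) (P : 'M[F]_m) (r : nat) (hr : (r <= m)%N) :
  is_ACI M ->
  is_factor_set z M S ->
  is_perm_mx P ->
  amx_zero (blk0 S hr (amx_lmul P (amx_rmul M (Q_F F S)))) ->
  rows_indep (blkA S r (amx_lmul P (amx_rmul M (Q_F F S)))) ->
  is_Fdecomp z S hr (amx_lmul P (amx_rmul M (Q_F F S))).
Proof.
move=> _ [R [R_unit [r' [hr' dec']]]] /is_perm_mxP [s ->] N0 A_indep.
apply: (is_Fdecomp_row_equiv _ R_unit N0 A_indep dec'); exact: unitmx_perm.
Qed.
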